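(* Let $x^\dagger$ be an $\mathcal R$-minimizing solution of $F(x)=y$ satisfying Assumption (A1) below with constants $\xi^\dagger$, $\beta$, $\varphi$, $\rho$. Let $\tilde y\in Y$ be noisy data with noise level $\delta:=\|\tilde y-y\|$, write $\tilde x_\alpha:=x_\alpha(\tilde y)$, and let $\alpha_*\in\Delta_q$ be a global minimizer of $\alpha\mapsto\Theta(\alpha,\tilde y)$ over $\Delta_q$ (Rule HR). Assume $\tilde x_{\alpha_*}\in\mathcal M_\rho$ and $\delta_*:=\|F(\tilde x_{\alpha_*})-\tilde y\|\neq 0$. Then $$D_{\xi^\dagger}\mathcal R(\tilde x_{\alpha_*},x^\dagger)\le C\Big(1+\frac{\delta^r}{\delta_*^r}\Big)\big(\delta^r+\varphi(\delta+\delta_* )\big),$$ where $C$ is a constant depending only on $\alpha_0$, $q$, $r$ and $\beta$.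
   Context: Standing setting: $X$ and $Y$ are reflexive Banach spaces (both norms written $\|\cdot\|$; $X^*$ is the dual of $X$ and $\langle\cdot,\cdot\rangle$ the duality pairing). $F:\mathcal D(F)\subset X\to Y$ is weakly closed, and $\mathcal R:X\to[0,\infty]$ is proper, lower semicontinuous and convex. A fixed exponent $1<r<\infty$ is given. The equation $F(x)=y$ (exact data $y\in Y$) has a solution in $\mathcal D(\mathcal R)=\{\mathcal R<\infty\}$, and for every $\alpha>0$ and every $z\in Y$ the functional $x\mapsto \|F(x)-z\|^r+\alpha\mathcal R(x)$ on $\mathcal D(F)$ is coercive. An $\mathcal R$-minimizing solution is a solution $x^\dagger$ of $F(x)=y$ with $\mathcal R(x^\dagger)=\min\{\mathcal R(x):x\in\mathcal D(F),F(x)=y\}$. For $z\in Y$ and $\alpha>0$, $x_\alpha(z)$ denotes a (fixed) minimizer of $\|F(x)-z\|^r+\alpha\mathcal R(x)$ over $x\in\mathcal D(F)$. $\partial\mathcal R(x)=\{\xi\in X^*:\mathcal R(\bar x)\ge\mathcal R(x)+\langle\xi,\bar x-x\rangle\ \forall\bar x\in X\}$, and for $\xi\in\partial\mathcal R(x)$ the Bregman distance is $D_\xi\mathcal R(\bar x,x)=\mathcal R(\bar x)-\mathcal R(x)-\langle\xi,\bar x-x\rangle$. For $\rho>0$, $\mathcal M_\rho:=\{x\in\mathcal D(F):\mathcal R(x)<\rho\}$. Rule HR: fix $\alpha_0>0$ and $0<q<1$, let $\Delta_q=\{\alpha_0q^j:j=0,1,2,\dots\}$ and for data $z$ set $\Theta(\alpha,z)=\|F(x_\alpha(z))-z\|^r/\alpha$.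 An index function is a continuous strictly increasing $\varphi:[0,\infty)\to[0,\infty)$ with $\varphi(0)=0$. Assumption (A1): $\partial\mathcal R(x^\dagger)\ne\emptyset$ and there exist $\xi^\dagger\in\partial\mathcal R(x^\dagger)$, $0\le\beta<1$, a concave index function $\varphi$ and $\rho>\mathcal R(x^\dagger)$ such that $\langle\xi^\dagger,x^\dagger-x\rangle\le\beta D_{\xi^\dagger}\mathcal R(x,x^\dagger)+\varphi(\|F(x)-F(x^\dagger)\|)$ for all $x\in\mathcal M_\rho$. *)

From Stdlib Require Import Reals.
Open Scope R_scope.

Record NormedSpace := mkNS {
  car :> Type;
  nzero : car;
  nadd : car -> car -> car;
  nopp : car -> car;
  nscal : R -> car -> car;
  nnorm : car -> R;
  ax_add_assoc : forall x y z, nadd x (nadd y z) = nadd (nadd x y) z;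
  ax_add_comm : forall x y, nadd x y = nadd y x;
  ax_add_0 : forall x, nadd x nzero = x;
  ax_add_opp : forall x, nadd x (nopp x) = nzero;
  ax_scal_assoc : forall a b x, nscal a (nscal b x) = nscal (a * b) x;
  ax_scal_1 : forall x, nscal 1 x = x;
  ax_scal_distr_l : forall a x y, nscal a (nadd x y) = nadd (nscal a x) (nscal a y);
  ax_scal_distr_r : forall a b x, nscal (a + b) x = nadd (nscal a x) (nscal b x);
  ax_norm_eq0 : forall x, nnorm x = 0 -> x = nzero;
  ax_norm_scal : forall a x, nnorm (nscal a x) = Rabs a * nnorm x;
  ax_norm_triangle : forall x y, nnorm (nadd x y) <= nnorm x + nnorm y
}.
Arguments nzero {_}.
Arguments nadd {_} _ _.
Arguments nopp {_} _.
Arguments nscal {_} _ _.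
Arguments nnorm {_} _.

Definition nsub {X : NormedSpace} (x y : X) : X := nadd x (nopp y).

Definition strong_cv {X : NormedSpace} (u : nat -> X) (x : X) : Prop :=
  Un_cv (fun n => nnorm (nsub (u n) x)) 0.

Definition is_Banach (X : NormedSpace) : Prop :=
  forall u : nat -> X,
    (forall eps, eps > 0 -> exists N, forall m n, (N <= m)%nat -> (N <= n)%nat ->
        nnorm (nsub (u m) (u n)) < eps) ->
    exists l, strong_cv u l.

(** Elements of the dual X^*: bounded linear functionals; <f, x> = f x. *)
Definition is_dual {X : NormedSpace} (f : X -> R) : Prop :=
  (forall x y, f (nadd x y) = f x + f y) /\
  (forall a x, f (nscal a x) = a * f x) /\
  (exists M, forall x, Rabs (f x) <= M * nnorm x).

(** Reflexivity: every bounded linear functional on X^* is evaluation at a point.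
    Boundedness of Phi w.r.t. the dual norm: |Phi f| <= M K whenever K bounds f. *)
Definition reflexive (X : NormedSpace) : Prop :=
  forall Phi : (X -> R) -> R,
    (forall f g, is_dual f -> is_dual g -> Phi (fun x => f x + g x) = Phi f + Phi g) ->
    (forall a f, is_dual f -> Phi (fun x => a * f x) = a * Phi f) ->
    (exists M, forall f K, is_dual f -> 0 <= K ->
        (forall x, Rabs (f x) <= K * nnorm x) -> Rabs (Phi f) <= M * K) ->
    exists x : X, forall f, is_dual f -> Phi f = f x.

Definition weak_cv {X : NormedSpace} (u : nat -> X) (x : X) : Prop :=
  forall f, is_dual f -> Un_cv (fun n => f (u n)) (f x).

Definition weakly_closed {X Y : NormedSpace} (DF : X -> Prop) (F : X -> Y) : Prop :=
  forall (u : nat -> X) (x : X) (z : Y),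
    (forall n, DF (u n)) -> weak_cv u x -> weak_cv (fun n => F (u n)) z ->
    DF x /\ F x = z.

Inductive ERbar := Fin : R -> ERbar | PInf : ERbar.

Definition ext_le (a b : ERbar) : Prop :=
  match a, b with
  | _, PInf => True
  | PInf, Fin _ => False
  | Fin x, Fin y => x <= y
  end.

Definition ext_lt_R (a : ERbar) (c : R) : Prop :=
  match a with Fin x => x < c | PInf => False end.

Definition ext_add (a b : ERbar) : ERbar :=
  match a, b with Fin x, Fin y => Fin (x + y) | _, _ => PInf end.

(** scaling by a nonnegative real, with 0 * oo = 0 *)
Definition ext_scal (t : R) (a : ERbar) : ERbar :=
  match a with
  | Fin x => Fin (t * x)
  | PInf => if Req_EM_T t 0 then Fin 0 else PInf
  end.

(** power a^p for a >= 0 with 0^p = 0 (p > 0). *)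
Definition rpow (a p : R) : R :=
  match Rle_lt_dec a 0 with left _ => 0 | right _ => Rpower a p end.

Definition R_nonneg {X : NormedSpace} (Rf : X -> ERbar) : Prop :=
  forall x, match Rf x with Fin a => 0 <= a | PInf => True end.
Definition R_proper {X : NormedSpace} (Rf : X -> ERbar) : Prop :=
  exists x, Rf x <> PInf.
Definition R_lsc {X : NormedSpace} (Rf : X -> ERbar) : Prop :=
  forall (c : R) (u : nat -> X) (x : X),
    strong_cv u x -> (forall n, ext_le (Rf (u n)) (Fin c)) -> ext_le (Rf x) (Fin c).
Definition R_convex {X : NormedSpace} (Rf : X -> ERbar) : Prop :=
  forall x y t a b, 0 < t < 1 -> Rf x = Fin a -> Rf y = Fin b ->
    ext_le (Rf (nadd (nscal t x) (nscal (1 - t) y))) (Fin (t * a + (1 - t) * b)).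

Definition tik {X Y : NormedSpace} (F : X -> Y) (Rf : X -> ERbar) (r alpha : R) (z : Y)
  (x : X) : ERbar :=
  ext_add (Fin (rpow (nnorm (nsub (F x) z)) r)) (ext_scal alpha (Rf x)).

Definition is_minimizer {X Y : NormedSpace} (DF : X -> Prop) (F : X -> Y) (Rf : X -> ERbar)
  (r alpha : R) (z : Y) (x : X) : Prop :=
  DF x /\ forall x', DF x' -> ext_le (tik F Rf r alpha z x) (tik F Rf r alpha z x').

Definition coercive_tik {X Y : NormedSpace} (DF : X -> Prop) (F : X -> Y) (Rf : X -> ERbar)
  (r : R) : Prop :=
  forall alpha (z : Y), 0 < alpha ->
    forall M, exists K, forall x, DF x -> K <= nnorm x -> ext_le (Fin M) (tik F Rf r alpha z x).

(** Standing setting. xa alpha z is the fixed minimizer x_alpha(z). *)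
Definition standing (X Y : NormedSpace) (DF : X -> Prop) (F : X -> Y) (Rf : X -> ERbar)
  (r : R) (y : Y) (xa : R -> Y -> X) : Prop :=
  is_Banach X /\ reflexive X /\ is_Banach Y /\ reflexive Y /\
  weakly_closed DF F /\
  R_nonneg Rf /\ R_proper Rf /\ R_lsc Rf /\ R_convex Rf /\
  1 < r /\
  (exists x, DF x /\ F x = y /\ Rf x <> PInf) /\
  coercive_tik DF F Rf r /\
  (forall alpha z, 0 < alpha -> is_minimizer DF F Rf r alpha z (xa alpha z)).

Definition R_minimizing {X Y : NormedSpace} (DF : X -> Prop) (F : X -> Y) (Rf : X -> ERbar)
  (y : Y) (xd : X) : Prop :=
  DF xd /\ F xd = y /\ forall x, DF x -> F x = y -> ext_le (Rf xd) (Rf x).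

Definition subdiff {X : NormedSpace} (Rf : X -> ERbar) (x : X) (xi : X -> R) : Prop :=
  is_dual xi /\ forall xb, ext_le (ext_add (Rf x) (Fin (xi (nsub xb x)))) (Rf xb).

Definition bregman {X : NormedSpace} (Rf : X -> ERbar) (xi : X -> R) (xb x : X) : ERbar :=
  match Rf xb, Rf x with
  | Fin a, Fin b => Fin (a - b - xi (nsub xb x))
  | _, _ => PInf
  end.

Definition M_rho {X : NormedSpace} (DF : X -> Prop) (Rf : X -> ERbar) (rho : R) (x : X) : Prop :=
  DF x /\ ext_lt_R (Rf x) rho.

Definition index_function (phi : R -> R) : Prop :=
  phi 0 = 0 /\
  (forall t, 0 <= t -> 0 <= phi t) /\
  (forall s t, 0 <= s -> s < t -> phi s < phi t) /\
  (forall t, 0 <= t -> limit1_in phi (fun s => 0 <= s) (phi t) t).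

Definition concave_on_nonneg (phi : R -> R) : Prop :=
  forall s t l, 0 <= s -> 0 <= t -> 0 <= l <= 1 ->
    l * phi s + (1 - l) * phi t <= phi (l * s + (1 - l) * t).

Definition assumption_A1 {X Y : NormedSpace} (DF : X -> Prop) (F : X -> Y) (Rf : X -> ERbar)
  (xd : X) (xi : X -> R) (beta : R) (phi : R -> R) (rho : R) : Prop :=
  subdiff Rf xd xi /\ 0 <= beta < 1 /\ index_function phi /\ concave_on_nonneg phi /\
  ext_lt_R (Rf xd) rho /\
  forall x, M_rho DF Rf rho x ->
    ext_le (Fin (xi (nsub xd x)))
           (ext_add (ext_scal beta (bregman Rf xi x xd)) (Fin (phi (nnorm (nsub (F x) (F xd)))))).

Definition Theta {X Y : NormedSpace} (F : X -> Y) (xa : R -> Y -> X) (r alpha : R) (z : Y) : R :=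
  rpow (nnorm (nsub (F (xa alpha z)) z)) r / alpha.

Definition HR_choice {X Y : NormedSpace} (F : X -> Y) (xa : R -> Y -> X) (r alpha0 q : R)
  (z : Y) (astar : R) : Prop :=
  (exists j : nat, astar = alpha0 * q ^ j) /\
  forall k : nat, Theta F xa r astar z <= Theta F xa r (alpha0 * q ^ k) z.

From Stdlib Require Import Reals Lra Psatz Lia Classical.
Open Scope R_scope.

(* Write d_α = ‖F(x_α) - ỹ‖, a for the HR choice of α, η = d_a, P = δ^r and S = η^r.
   Comparing the Tikhonov functional at x_a with x^† and using (A1) gives
   (1-β) D ≤ (P - S)/a + φ(δ + η), so only the case S < P needs work, and there
   (P - S)/a ≤ (P/S) Θ(a).  For every grid value α ≥ a we have R(x_α) ≤ R(x_a) < ρ,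
   so (A1) applies to x_α as well and yields the discrepancy inequality
   d_α^r ≤ δ^r + α φ(d_α + δ).  Following the grid from a up to α0: either
   d_{α0} ≤ 2δ, so Θ(a) ≤ Θ(α0) ≤ 2^r P/α0, or the discrepancy crosses 2δ between
   α_j and α_{j+1} = q α_j; then the discrepancy inequality at α_j and the concavity
   of φ force P ≤ 3 α_j φ(δ + η), and Θ(a) ≤ Θ(α_{j+1}) ≤ 2^r P/(q α_j). *)

Section NormedSpaceFacts.
Variable X : NormedSpace.
Implicit Types x y z : X.

Lemma nadd_0_l x : nadd nzero x = x.
Proof. rewrite ax_add_comm, ax_add_0; reflexivity. Qed.

Lemma nopp_unique a x : nadd a x = nzero -> a = nopp x.
Proof.
  intros H. rewrite <- (ax_add_0 _ a), <- (ax_add_opp _ x), ax_add_assoc, H, nadd_0_l.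
  reflexivity.
Qed.

Lemma nscal_0_l x : nscal 0 x = nzero.
Proof.
  assert (Hdup : nscal 0 x = nadd (nscal 0 x) (nscal 0 x)).
  { rewrite <- ax_scal_distr_r. f_equal; ring. }
  rewrite <- (ax_add_opp _ (nscal 0 x)).
  transitivity (nadd (nadd (nscal 0 x) (nscal 0 x)) (nopp (nscal 0 x))).
  - rewrite <- ax_add_assoc, ax_add_opp, ax_add_0. reflexivity.
  - rewrite <- Hdup. reflexivity.
Qed.

Lemma nopp_scal x : nopp x = nscal (-1) x.
Proof.
  symmetry; apply nopp_unique. rewrite <- (ax_scal_1 _ x) at 2.
  rewrite <- ax_scal_distr_r. replace (-1 + 1) with 0 by ring. apply nscal_0_l.
Qed.

Lemma nnorm_opp x : nnorm (nopp x) = nnorm x.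
Proof. rewrite nopp_scal, ax_norm_scal, (Rabs_left (-1)) by lra. ring. Qed.

Lemma nnorm_0 : nnorm (@nzero X) = 0.
Proof. rewrite <- (nscal_0_l nzero), ax_norm_scal, Rabs_R0; ring. Qed.

Lemma nnorm_nonneg x : 0 <= nnorm x.
Proof.
  pose proof (ax_norm_triangle _ x (nopp x)) as H.
  rewrite ax_add_opp, nnorm_0, nnorm_opp in H. lra.
Qed.

Lemma nsub_swap x y : nsub y x = nopp (nsub x y).
Proof.
  apply nopp_unique. unfold nsub.
  rewrite <- ax_add_assoc, (ax_add_assoc _ (nopp x) x (nopp y)).
  rewrite (ax_add_comm _ (nopp x) x), ax_add_opp, nadd_0_l, ax_add_opp. reflexivity.
Qed.

Lemma nnorm_nsub_swap x y : nnorm (nsub y x) = nnorm (nsub x y).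
Proof. rewrite nsub_swap, nnorm_opp; reflexivity. Qed.

Lemma nnorm_nsub_triangle x y z : nnorm (nsub x z) <= nnorm (nsub x y) + nnorm (nsub y z).
Proof.
  replace (nsub x z) with (nadd (nsub x y) (nsub y z)); [apply ax_norm_triangle|].
  unfold nsub. rewrite <- ax_add_assoc, (ax_add_assoc _ (nopp y) y (nopp z)).
  rewrite (ax_add_comm _ (nopp y) y), ax_add_opp, nadd_0_l. reflexivity.
Qed.

Lemma dual_nsub_swap (xi : X -> R) x y : is_dual xi -> xi (nsub y x) = - xi (nsub x y).
Proof.
  intros [Hadd _]. rewrite nsub_swap.
  assert (H0 : xi nzero = 0).
  { pose proof (Hadd nzero nzero) as H. rewrite ax_add_0 in H. lra. }
  pose proof (Hadd (nopp (nsub x y)) (nsub x y)) as H.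
  rewrite ax_add_comm, ax_add_opp, H0 in H. lra.
Qed.

End NormedSpaceFacts.

Lemma Rpower_pos x y : 0 < Rpower x y.
Proof. apply exp_pos. Qed.

Lemma rpow_nonneg a p : 0 <= rpow a p.
Proof. unfold rpow; destruct (Rle_lt_dec a 0); [lra | left; apply Rpower_pos]. Qed.

Lemma rpow_nonpos a p : a <= 0 -> rpow a p = 0.
Proof. intros; unfold rpow; destruct (Rle_lt_dec a 0); lra. Qed.

Lemma rpow_pos_eq a p : 0 < a -> rpow a p = Rpower a p.
Proof. intros; unfold rpow; destruct (Rle_lt_dec a 0); [lra | reflexivity]. Qed.

Lemma rpow_le_compat a b p : 0 < p -> 0 <= a <= b -> rpow a p <= rpow b p.
Proof.
  intros Hp [Ha Hab]. destruct (Req_dec a 0) as [->|Ha0].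
  - rewrite rpow_nonpos by lra. apply rpow_nonneg.
  - rewrite !rpow_pos_eq by lra. apply Rle_Rpower_l; lra.
Qed.

Lemma rpow_le_double s d p : 0 < p -> 0 <= s <= 2 * d -> rpow s p <= Rpower 2 p * rpow d p.
Proof.
  intros Hp Hs. eapply Rle_trans; [apply (rpow_le_compat s (2 * d)); lra|].
  destruct (Req_dec d 0) as [->|Hd].
  - rewrite Rmult_0_r, !rpow_nonpos by lra. lra.
  - rewrite !rpow_pos_eq by lra. rewrite Rpower_mult_distr by lra. lra.
Qed.

Lemma rpow_split x r : 0 < x -> rpow x r = x * Rpower x (r - 1).
Proof.
  intros Hx. rewrite rpow_pos_eq by lra.
  replace r with (1 + (r - 1)) at 1 by ring. rewrite Rpower_plus, Rpower_1; auto.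
Qed.

Lemma index_function_le (phi : R -> R) s t :
  index_function phi -> 0 <= s -> s <= t -> phi s <= phi t.
Proof.
  intros [_ [_ [Hincr _]]] Hs Hst.
  destruct (Req_dec s t) as [->|Hne]; [lra | left; apply Hincr; lra].
Qed.

Lemma concave_ratio_le (phi : R -> R) u v :
  concave_on_nonneg phi -> phi 0 = 0 -> 0 < v <= u -> phi u * v <= u * phi v.
Proof.
  intros Hconc H0 Hvu.
  assert (Hl : 0 <= v / u <= 1).
  { split; [apply Rlt_le, Rdiv_lt_0_compat; lra|].
    apply (Rmult_le_reg_r u); [lra|]. unfold Rdiv; rewrite Rmult_assoc, Rinv_l; lra. }
  pose proof (Hconc u 0 (v / u) ltac:(lra) ltac:(lra) Hl) as H.
  rewrite H0 in H. replace (v / u * u + (1 - v / u) * 0) with v in H by (field; lra).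
  apply (Rmult_le_compat_l u) in H; [|lra].
  replace (u * (v / u * phi u + (1 - v / u) * 0)) with (phi u * v) in H by (field; lra).
  exact H.
Qed.

Lemma grid_antitone q k J : 0 <= q <= 1 -> (k <= J)%nat -> q ^ J <= q ^ k.
Proof.
  intros Hq HkJ. replace J with (k + (J - k))%nat by lia. rewrite pow_add.
  assert (q ^ (J - k) <= 1) by (rewrite <- (pow1 (J - k)); apply pow_incr; lra).
  pose proof (pow_le q k ltac:(lra)). nra.
Qed.

Lemma first_crossing (P : nat -> Prop) J :
  P J -> P 0%nat \/ exists j, (j < J)%nat /\ ~ P j /\ P (S j).
Proof.
  induction J as [|J IH]; intros HJ; [now left|].
  destruct (classic (P J)) as [HPJ|HPJ].
  - destruct (IH HPJ) as [H0|[j [Hj Hcross]]]; [now left | right; exists j; split; [lia|exact Hcross]].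
  - right; exists J; auto.
Qed.

(* Crossing step: a discrepancy above 2δ at α is only possible if δ^r ≤ 3 α Φ. *)
Lemma discrepancy_crossing r a d c t Phi phit :
  1 < r -> 0 < d <= c -> 0 < a -> 2 * d < t ->
  phit * c <= (t + d) * Phi -> rpow t r <= rpow d r + a * phit ->
  rpow d r <= 3 * a * Phi.
Proof.
  intros Hr Hdc Ha Ht Hconc Hdisc.
  set (e := Rpower d (r - 1)).
  assert (He : 0 < e) by apply Rpower_pos.
  assert (Hd : rpow d r = d * e) by (apply rpow_split; lra).
  assert (Hte : t * e <= rpow t r).
  { rewrite rpow_split by lra. apply Rmult_le_compat_l; [lra|].
    apply Rle_Rpower_l; lra. }
  assert (Hgap : e * (t + d) <= 3 * a * phit) by nra.
  assert (Hec : (t + d) * (e * c) <= (t + d) * (3 * a * Phi)) by nra.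
  apply Rmult_le_reg_l in Hec; nra.
Qed.

Lemma grid_Theta_bound r q a0 d c theta Phi (phi : R -> R) (s : nat -> R) (J : nat) :
  1 < r -> 0 < q < 1 -> 0 < a0 -> 0 < d <= c -> c <= 2 * d -> 0 <= Phi ->
  (forall k, 0 <= s k) ->
  (forall k, (k <= J)%nat -> rpow (s k) r <= rpow d r + a0 * q ^ k * phi (s k + d)) ->
  (forall k, theta <= rpow (s k) r / (a0 * q ^ k)) ->
  s J <= 2 * d ->
  (forall u, c <= u -> phi u * c <= u * Phi) ->
  theta <= Rpower 2 r / a0 * rpow d r + 3 * Rpower 2 r / q * Phi.
Proof.
  intros Hr Hq Ha0 Hdc Hc2 HPhi Hs Hdisc Htheta HJ Hconc.
  replace (Rpower 2 r / a0 * rpow d r + 3 * Rpower 2 r / q * Phi)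
    with (Rpower 2 r * rpow d r / a0 + 3 * Rpower 2 r * Phi / q) by (field; lra).
  assert (H2r : 0 < Rpower 2 r) by apply Rpower_pos.
  assert (Hdr := rpow_nonneg d r).
  assert (Hfirst : 0 <= Rpower 2 r * rpow d r / a0)
    by (apply Rmult_le_pos; [nra | left; apply Rinv_0_lt_compat; lra]).
  assert (Hsecond : 0 <= 3 * Rpower 2 r * Phi / q)
    by (apply Rmult_le_pos; [nra | left; apply Rinv_0_lt_compat; lra]).
  destruct (first_crossing (fun k => s k <= 2 * d) J HJ) as [H0|[j [Hj [Hgt Hle]]]].
  - specialize (Htheta 0%nat). rewrite pow_O, Rmult_1_r in Htheta.
    assert (rpow (s 0%nat) r <= Rpower 2 r * rpow d r)
      by (apply rpow_le_double; [lra | split; [apply Hs | exact H0]]).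
    enough (rpow (s 0%nat) r / a0 <= Rpower 2 r * rpow d r / a0) by lra.
    apply Rmult_le_compat_r; [left; apply Rinv_0_lt_compat|]; lra.
  - apply Rnot_le_lt in Hgt.
    set (aj := a0 * q ^ j).
    assert (Haj : 0 < aj) by (apply Rmult_lt_0_compat; [lra | apply pow_lt; lra]).
    assert (Hdr3 : rpow d r <= 3 * aj * Phi).
    { apply (discrepancy_crossing r aj d c (s j) Phi (phi (s j + d))); auto; try lra.
      - apply Hconc. pose proof (Hs j); lra.
      - apply Hdisc; lia. }
    assert (Hsj : rpow (s (S j)) r <= Rpower 2 r * rpow d r)
      by (apply rpow_le_double; [lra | split; [apply Hs | exact Hle]]).
    specialize (Htheta (S j)).
    replace (a0 * q ^ S j) with (aj * q) in Htheta by (unfold aj; simpl; ring).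
    enough (rpow (s (S j)) r / (aj * q) <= 3 * Rpower 2 r * Phi / q) by lra.
    apply (Rmult_le_reg_r (aj * q)); [nra|].
    unfold Rdiv. rewrite Rmult_assoc, Rinv_l by nra.
    replace (3 * Rpower 2 r * Phi * / q * (aj * q)) with (Rpower 2 r * (3 * aj * Phi))
      by (field; lra).
    nra.
Qed.

Lemma tik_le_finite {X Y : NormedSpace} (F : X -> Y) Rf r a (z : Y) (x x' : X) b :
  0 < a -> Rf x' = Fin b -> ext_le (tik F Rf r a z x) (tik F Rf r a z x') ->
  exists v, Rf x = Fin v /\
    rpow (nnorm (nsub (F x) z)) r + a * v <= rpow (nnorm (nsub (F x') z)) r + a * b.
Proof.
  intros Ha Hb H. unfold tik in H. rewrite Hb in H.
  destruct (Rf x) as [v|] eqn:Hv; [now exists v|].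
  simpl in H. destruct (Req_EM_T a 0); [lra | contradiction].
Qed.

Lemma bregman_nonneg {X : NormedSpace} (Rf : X -> ERbar) (xi : X -> R) x0 x a v :
  subdiff Rf x0 xi -> Rf x0 = Fin a -> Rf x = Fin v -> 0 <= v - a - xi (nsub x x0).
Proof. intros [_ Hsub] Ha Hv. specialize (Hsub x). rewrite Ha, Hv in Hsub. simpl in Hsub. lra. Qed.

Section TikhonovMinimizers.
Variables (X Y : NormedSpace) (DF : X -> Prop) (F : X -> Y) (Rf : X -> ERbar).
Variables (r : R) (z : Y) (xa : R -> Y -> X).
Hypothesis Hxa : forall alpha, 0 < alpha -> is_minimizer DF F Rf r alpha z (xa alpha z).

Lemma regularizer_antitone a b va :
  0 < a <= b -> Rf (xa a z) = Fin va -> exists vb, Rf (xa b z) = Fin vb /\ vb <= va.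
Proof.
  intros Hab Hva. destruct (Req_dec a b) as [<-|Hne]; [exists va; split; [exact Hva | lra]|].
  destruct (Hxa a ltac:(lra)) as [HDa Hmina].
  destruct (Hxa b ltac:(lra)) as [HDb Hminb].
  destruct (tik_le_finite F Rf r b z _ _ va ltac:(lra) Hva (Hminb _ HDa)) as [vb [Hvb Hb]].
  destruct (tik_le_finite F Rf r a z _ _ vb ltac:(lra) Hvb (Hmina _ HDb)) as [va' [Hva' Ha]].
  rewrite Hva in Hva'; injection Hva' as <-.
  exists vb; split; [exact Hvb | nra].
Qed.

End TikhonovMinimizers.

Section SourceCondition.
Variables (X Y : NormedSpace) (DF : X -> Prop) (F : X -> Y) (Rf : X -> ERbar).
Variables (xd : X) (xi : X -> R) (beta : R) (phi : R -> R) (rho A : R).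
Hypothesis Hsub : subdiff Rf xd xi.
Hypothesis Hbeta : beta < 1.
Hypothesis HRxd : Rf xd = Fin A.
Hypothesis HA1 : forall x, M_rho DF Rf rho x ->
  ext_le (Fin (xi (nsub xd x)))
    (ext_add (ext_scal beta (bregman Rf xi x xd)) (Fin (phi (nnorm (nsub (F x) (F xd)))))).

Lemma A1_bregman_le x v :
  M_rho DF Rf rho x -> Rf x = Fin v ->
  (1 - beta) * (v - A - xi (nsub x xd)) <= v - A + phi (nnorm (nsub (F x) (F xd))).
Proof.
  intros Hx Hv. pose proof (HA1 x Hx) as H.
  unfold bregman in H. rewrite Hv, HRxd in H. simpl in H.
  rewrite (dual_nsub_swap _ xi x xd (proj1 Hsub)) in H. lra.
Qed.

Lemma A1_regularizer_gap x v :
  M_rho DF Rf rho x -> Rf x = Fin v -> A - v <= phi (nnorm (nsub (F x) (F xd))).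
Proof.
  intros Hx Hv. pose proof (A1_bregman_le x v Hx Hv).
  pose proof (bregman_nonneg Rf xi xd x A v Hsub HRxd Hv). nra.
Qed.

End SourceCondition.

Section HeuristicRule.
Variables (X Y : NormedSpace) (DF : X -> Prop) (F : X -> Y) (Rf : X -> ERbar).
Variables (r : R) (y yt : Y) (xa : R -> Y -> X).
Variables (xd : X) (xi : X -> R) (beta : R) (phi : R -> R) (rho A : R).
Variables (astar Rs : R).
Hypothesis Hr : 1 < r.
Hypothesis Hxa : forall alpha, 0 < alpha -> is_minimizer DF F Rf r alpha yt (xa alpha yt).
Hypothesis HDxd : DF xd.
Hypothesis HFxd : F xd = y.
Hypothesis HRxd : Rf xd = Fin A.
Hypothesis Hsub : subdiff Rf xd xi.
Hypothesis Hbeta : beta < 1.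
Hypothesis Hphi : index_function phi.
Hypothesis Hconc : concave_on_nonneg phi.
Hypothesis HA1 : forall x, M_rho DF Rf rho x ->
  ext_le (Fin (xi (nsub xd x)))
    (ext_add (ext_scal beta (bregman Rf xi x xd)) (Fin (phi (nnorm (nsub (F x) (F xd)))))).
Hypothesis Hast : 0 < astar.
Hypothesis HMs : M_rho DF Rf rho (xa astar yt).
Hypothesis HRs : Rf (xa astar yt) = Fin Rs.

Local Notation delta := (nnorm (nsub yt y)).
Local Notation disc alpha := (nnorm (nsub (F (xa alpha yt)) yt)).

Lemma tik_le_solution alpha :
  0 < alpha ->
  exists v, Rf (xa alpha yt) = Fin v /\ rpow (disc alpha) r + alpha * v <= rpow delta r + alpha * A.
Proof.
  intros Ha. destruct (Hxa alpha Ha) as [_ Hmin].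
  destruct (tik_le_finite F Rf r alpha yt _ xd A Ha HRxd (Hmin xd HDxd)) as [v [Hv Hle]].
  rewrite HFxd, (nnorm_nsub_swap _ yt y) in Hle. now exists v.
Qed.

Lemma phi_discrepancy_le x : phi (nnorm (nsub (F x) (F xd))) <= phi (nnorm (nsub (F x) yt) + delta).
Proof.
  apply index_function_le; [exact Hphi | apply nnorm_nonneg|].
  rewrite HFxd. apply nnorm_nsub_triangle.
Qed.

Lemma discrepancy_inequality alpha :
  astar <= alpha -> rpow (disc alpha) r <= rpow delta r + alpha * phi (disc alpha + delta).
Proof.
  intros Hal.
  destruct (tik_le_solution alpha ltac:(lra)) as [v [Hv Htik]].
  destruct (regularizer_antitone X Y DF F Rf r yt xa Hxa astar alpha Rs ltac:(lra) HRs)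
    as [v' [Hv' Hvle]].
  rewrite Hv in Hv'; injection Hv' as <-.
  assert (HMa : M_rho DF Rf rho (xa alpha yt)).
  { split; [apply (Hxa alpha); lra|]. rewrite Hv. destruct HMs as [_ HRrho].
    rewrite HRs in HRrho. simpl in *; lra. }
  pose proof (A1_regularizer_gap X Y DF F Rf xd xi beta phi rho A Hsub Hbeta HRxd HA1 _ v HMa Hv).
  pose proof (phi_discrepancy_le (xa alpha yt)). nra.
Qed.

Lemma bregman_HR_le :
  (1 - beta) * (Rs - A - xi (nsub (xa astar yt) xd))
  <= (rpow delta r - rpow (disc astar) r) / astar + phi (delta + disc astar).
Proof.
  destruct (tik_le_solution astar Hast) as [v [Hv Htik]].
  rewrite HRs in Hv; injection Hv as <-.
  pose proof (A1_bregman_le X Y DF F Rf xd xi beta phi rho A Hsub HRxd HA1 _ Rs HMs HRs).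
  pose proof (phi_discrepancy_le (xa astar yt)).
  assert (Rs - A <= (rpow delta r - rpow (disc astar) r) / astar).
  { apply (Rmult_le_reg_l astar); [lra|].
    replace (astar * ((rpow delta r - rpow (disc astar) r) / astar))
      with (rpow delta r - rpow (disc astar) r) by (field; lra).
    lra. }
  rewrite Rplus_comm in H0. lra.
Qed.

Lemma Theta_HR_le a0 q :
  0 < a0 -> 0 < q < 1 -> HR_choice F xa r a0 q yt astar -> 0 < disc astar < delta ->
  Theta F xa r astar yt
  <= Rpower 2 r / a0 * rpow delta r + 3 * Rpower 2 r / q * phi (delta + disc astar).
Proof.
  intros Ha0 Hq [[J HJ] Hmin] Heta.
  destruct Hphi as [Hphi0 [Hphi_nonneg _]].
  apply (grid_Theta_bound r q a0 delta (delta + disc astar) _ _ phi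
           (fun k => disc (a0 * q ^ k)) J); auto; try lra.
  - apply Hphi_nonneg; lra.
  - intros k; apply nnorm_nonneg.
  - intros k Hk. apply discrepancy_inequality.
    rewrite HJ. apply Rmult_le_compat_l; [lra|]. apply grid_antitone; [lra | exact Hk].
  - rewrite <- HJ. lra.
  - intros u Hu. apply concave_ratio_le; auto; lra.
Qed.

Lemma HR_residual_le a0 q :
  0 < a0 -> 0 < q < 1 -> HR_choice F xa r a0 q yt astar -> 0 < disc astar ->
  (rpow delta r - rpow (disc astar) r) / astar
  <= rpow delta r / rpow (disc astar) r
     * (Rpower 2 r / a0 * rpow delta r + 3 * Rpower 2 r / q * phi (delta + disc astar)).
Proof.
  intros Ha0 Hq HHR Heta.
  set (P := rpow delta r). set (S := rpow (disc astar) r).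
  set (B := Rpower 2 r / a0 * P + 3 * Rpower 2 r / q * phi (delta + disc astar)).
  assert (HS : 0 < S) by (unfold S; rewrite rpow_pos_eq by lra; apply Rpower_pos).
  assert (HP : 0 <= P) by apply rpow_nonneg.
  assert (HPS : 0 <= P / S) by (apply Rmult_le_pos; [lra | left; apply Rinv_0_lt_compat; lra]).
  destruct (Rle_lt_dec P S) as [HPleS|HSltP].
  - assert (HB : 0 <= B).
    { destruct Hphi as [_ [Hphi_nonneg _]].
      assert (0 <= phi (delta + disc astar)) by (apply Hphi_nonneg; pose proof (nnorm_nonneg _ (nsub yt y)); lra).
      assert (0 < Rpower 2 r) by apply Rpower_pos.
      assert (0 < / a0) by (apply Rinv_0_lt_compat; lra).
      assert (0 < / q) by (apply Rinv_0_lt_compat; lra).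
      unfold B, Rdiv. apply Rplus_le_le_0_compat; repeat apply Rmult_le_pos; try apply rpow_nonneg; lra. }
    assert ((P - S) / astar <= 0).
    { unfold Rdiv. assert (0 < / astar) by (apply Rinv_0_lt_compat; lra). nra. }
    pose proof (Rmult_le_pos _ _ HPS HB). lra.
  - assert (Heta_lt : disc astar < delta).
    { destruct (Rlt_le_dec (disc astar) delta) as [H|H]; [exact H|].
      assert (P <= S) by (apply rpow_le_compat; [lra | split; [apply nnorm_nonneg | exact H]]).
      lra. }
    pose proof (Theta_HR_le a0 q Ha0 Hq HHR (conj Heta Heta_lt)) as HTheta.
    unfold Theta in HTheta. fold P S in HTheta. fold B in HTheta.
    replace ((P - S) / astar) with (P / S * (S / astar) - S / astar) by (field; lra).
    assert (0 <= S / astar) by (apply Rmult_le_pos; [lra | left; apply Rinv_0_lt_compat; lra]).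
    nra.
Qed.

End HeuristicRule.

Lemma HR_constant_bound beta c1 c2 D E Q P Phi :
  beta < 1 -> 0 <= c1 -> 0 <= c2 -> 0 <= Q -> 0 <= P -> 0 <= Phi ->
  (1 - beta) * D <= E + Phi -> E <= Q * (c1 * P + c2 * Phi) ->
  D <= (c1 + c2 + 1) / (1 - beta) * (1 + Q) * (P + Phi).
Proof.
  intros Hbeta Hc1 Hc2 HQ HP HPhi HD HE.
  assert (Hlin : c1 * P + c2 * Phi <= (c1 + c2 + 1) * (P + Phi)) by nra.
  assert (HQ' : Q * (c1 * P + c2 * Phi) <= Q * ((c1 + c2 + 1) * (P + Phi)))
    by (apply Rmult_le_compat_l; lra).
  assert (HPhi' : Phi <= (c1 + c2 + 1) * (P + Phi)) by nra.
  assert (Hsum : Q * (c1 * P + c2 * Phi) + Phi <= (c1 + c2 + 1) * (1 + Q) * (P + Phi)) by lra.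
  apply (Rmult_le_reg_l (1 - beta)); [lra|].
  replace ((1 - beta) * ((c1 + c2 + 1) / (1 - beta) * (1 + Q) * (P + Phi)))
    with ((c1 + c2 + 1) * (1 + Q) * (P + Phi)) by (field; lra).
  lra.
Qed.

Theorem theorem2p1 :
  forall (alpha0 q r beta : R),
    0 < alpha0 -> 0 < q < 1 -> 1 < r -> 0 <= beta < 1 ->
    exists C : R,
      forall (X Y : NormedSpace) (DF : X -> Prop) (F : X -> Y) (Rf : X -> ERbar)
             (y : Y) (xa : R -> Y -> X) (xd : X) (xi : X -> R) (phi : R -> R) (rho : R)
             (yt : Y) (astar : R),
        standing X Y DF F Rf r y xa ->
        R_minimizing DF F Rf y xd ->
        assumption_A1 DF F Rf xd xi beta phi rho ->
        HR_choice F xa r alpha0 q yt astar ->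
        M_rho DF Rf rho (xa astar yt) ->
        let delta := nnorm (nsub yt y) in
        let dstar := nnorm (nsub (F (xa astar yt)) yt) in
        dstar <> 0 ->
        ext_le (bregman Rf xi (xa astar yt) xd)
               (Fin (C * (1 + rpow delta r / rpow dstar r) * (rpow delta r + phi (delta + dstar)))).
Proof.
  intros a0 q r beta Ha0 Hq Hr Hbeta.
  exists ((Rpower 2 r / a0 + 3 * Rpower 2 r / q + 1) / (1 - beta)).
  intros X Y DF F Rf y xa xd xi phi rho yt astar Hst [HDxd [HFxd _]] HA1 HHR HMs delta dstar Hds.
  destruct Hst as [_ [_ [_ [_ [_ [_ [_ [_ [_ [_ [_ [_ Hxa]]]]]]]]]]]].
  pose proof (fun alpha => Hxa alpha yt) as Hxa_yt.
  destruct HA1 as [Hsub [_ [Hphi [Hconc [HRxd HA1]]]]].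
  assert (Hast : 0 < astar)
    by (destruct HHR as [[J ->] _]; apply Rmult_lt_0_compat; [lra | apply pow_lt; lra]).
  assert (Hdstar : 0 < dstar) by (assert (0 <= dstar) by apply nnorm_nonneg; lra).
  destruct (Rf xd) as [A|] eqn:HA; [|contradiction].
  destruct (Rf (xa astar yt)) as [Rs|] eqn:HRs; [|destruct HMs; rewrite HRs in *; contradiction].
  unfold bregman; rewrite HRs, HA; simpl.
  assert (H2r : 0 < Rpower 2 r) by apply Rpower_pos.
  assert (Hinv : forall t, 0 < t -> 0 <= / t) by (intros t Ht; left; apply Rinv_0_lt_compat, Ht).
  apply (HR_constant_bound beta _ _ _ ((rpow delta r - rpow dstar r) / astar)).
  - lra.
  - apply Rmult_le_pos; [lra | apply Hinv; lra].
  - apply Rmult_le_pos; [lra | apply Hinv; lra].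
  - apply Rmult_le_pos; [apply rpow_nonneg | apply Hinv].
    rewrite rpow_pos_eq by lra. apply Rpower_pos.
  - apply rpow_nonneg.
  - destruct Hphi as [_ [Hphi_nonneg _]]. apply Hphi_nonneg.
    assert (0 <= delta) by apply nnorm_nonneg. lra.
  - eapply bregman_HR_le; eassumption.
  - eapply HR_residual_le; try eassumption; lra.
Qed.
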